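(* Assume $W$ satisfies conditions (i), (ii) and (iv) below on $[0,T]$. Then for all $0\le t_0<t_1\le t_2<t_3\le T$, $$\lim_{n\to\infty}\sum_{j=\lfloor nt_0/2\rfloor+1}^{\lfloor nt_1/2\rfloor}\ \sum_{k=\lfloor nt_2/2\rfloor+1}^{\lfloor nt_3/2\rfloor}\Big|\beta_n(2j-1,2k-1)^2-\beta_n(2j-1,2k-2)^2-\beta_n(2j-2,2k-1)^2+\beta_n(2j-2,2k-2)^2\Big|=0.$$
   Context: $W=\{W_t,t\ge0\}$ is a centered Gaussian process with continuous covariance, and $\beta_n(j,k)=\mathbb E[(W_{(j+1)/n}-W_{j/n})(W_{(k+1)/n}-W_{k/n})]$. (The summand equals $|\langle\partial_{\frac{2j-1}{n}}^{\otimes2}-\partial_{\frac{2j-2}{n}}^{\otimes2},\partial_{\frac{2k-1}{n}}^{\otimes2}-\partial_{\frac{2k-2}{n}}^{\otimes2}\rangle_{\mathfrak H^{\otimes2}}|$ with $\partial_{j/n}=\mathbf 1_{[j/n,(j+1)/n]}$.) Conditions (constants may depend on $T$): (i) $\mathbb E[(W_t-W_{t-s})^2]\le C_1 s^{1/2}$ for $0<s\le t\le T$. (ii) There are $1<\alpha\le3/2$, $\beta=\frac32-\alpha$ such that for $s>0$, $2s\le r,t\le T$, $|t-r|\ge2s$: $|\mathbb E[(W_t-W_{t-s})(W_r-W_{r-s})]|\le C_1s^2|t-r|^{-\alpha}(t\wedge r-s)^{-\beta}+C_1s^2|t-r|^{-3/2}$. (iv) For $0<s\le t\le T-s$: $|\mathbb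 E[W_t(W_{t+s}-W_{t-s})]|\le C_3s^{1/2}$ if $t<2s$ and $\le C_3s(t-s)^{-1/2}$ if $t\ge2s$; for $0<s\le r\le T$: $|\mathbb E[W_r(W_{t+s}-W_{t-s})]|\le C_3s^{1/2}$ if $t<2s$ or $|t-r|<2s$, and $\le C_3s(t-s)^{-1/2}+C_3s|t-r|^{-1/2}$ if $t\ge2s$ and $|t-r|\ge2s$; and for $t>2s$: $|\mathbb E[W_s(W_t-W_{t-s})]|\le C_3s^{1/2+\gamma}(t-2s)^{-\gamma}$ for some $\gamma>0$. *)

From Stdlib Require Import Reals Lra List.
Open Scope R_scope.

(* A covariance function K s t = E[W_s W_t] of the process W on [0, oo). *)

Definition cov_symmetric (K : R -> R -> R) : Prop :=
  forall s t, K s t = K t s.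

(* Positive semidefinite on [0,oo): every finite family of times and
   real coefficients gives a nonnegative quadratic form.  Together with
   symmetry, this is exactly the condition for K to be the covariance of
   some centered Gaussian process indexed by t >= 0. *)
Definition cov_psd (K : R -> R -> R) : Prop :=
  forall (ts cs : list R), length ts = length cs ->
    Forall (fun t => 0 <= t) ts ->
    0 <= fold_right Rplus 0
           (map (fun p => fold_right Rplus 0
                    (map (fun q => fst p * fst q * K (snd p) (snd q))
                         (combine cs ts)))
                (combine cs ts)).

Definition cov_continuous (K : R -> R -> R) : Prop :=
  forall s t, 0 <= s -> 0 <= t -> forall eps, 0 < eps -> exists delta, 0 < delta /\
    forall s' t', 0 <= s' -> 0 <= t' -> Rabs (s' - s) < delta -> Rabs (t' - t) < delta ->
      Rabs (K s' t' - K s t) < eps.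

Definition gaussian_cov (K : R -> R -> R) : Prop :=
  cov_symmetric K /\ cov_psd K /\ cov_continuous K.

(* E[(W_a - W_b)(W_c - W_d)] *)
Definition covinc (K : R -> R -> R) (a b c d : R) : R :=
  K a c - K a d - K b c + K b d.

(* E[W_r (W_a - W_b)] *)
Definition covpt (K : R -> R -> R) (r a b : R) : R := K r a - K r b.

(* beta_n(j,k) = E[(W_{(j+1)/n} - W_{j/n})(W_{(k+1)/n} - W_{k/n})] *)
Definition beta (K : R -> R -> R) (n j k : nat) : R :=
  covinc K (INR (j+1) / INR n) (INR j / INR n) (INR (k+1) / INR n) (INR k / INR n).

Definition cond_i (K : R -> R -> R) (T C1 : R) : Prop :=
  forall s t, 0 < s -> s <= t -> t <= T ->
    covinc K t (t - s) t (t - s) <= C1 * sqrt s.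

Definition cond_ii (K : R -> R -> R) (T C1 alpha : R) : Prop :=
  let beta0 := 3/2 - alpha in
  forall s r t, 0 < s -> 2*s <= r -> r <= T -> 2*s <= t -> t <= T ->
    2*s <= Rabs (t - r) ->
    Rabs (covinc K t (t - s) r (r - s)) <=
      C1 * s^2 * Rpower (Rabs (t - r)) (- alpha) * Rpower (Rmin t r - s) (- beta0)
      + C1 * s^2 * Rpower (Rabs (t - r)) (- (3/2)).

Definition cond_iv (K : R -> R -> R) (T C3 gamma : R) : Prop :=
  (forall s t, 0 < s -> s <= t -> t <= T - s ->
     (t < 2*s -> Rabs (covpt K t (t + s) (t - s)) <= C3 * sqrt s) /\
     (2*s <= t -> Rabs (covpt K t (t + s) (t - s)) <= C3 * s * Rpower (t - s) (- (1/2))))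
  /\
  (forall s r t, 0 < s -> s <= r -> r <= T -> s <= t -> t <= T - s ->
     ((t < 2*s \/ Rabs (t - r) < 2*s) ->
        Rabs (covpt K r (t + s) (t - s)) <= C3 * sqrt s) /\
     ((2*s <= t /\ 2*s <= Rabs (t - r)) ->
        Rabs (covpt K r (t + s) (t - s)) <=
          C3 * s * Rpower (t - s) (- (1/2)) + C3 * s * Rpower (Rabs (t - r)) (- (1/2))))
  /\
  (forall s t, 0 < s -> 2*s < t -> t <= T ->
     Rabs (covpt K s t (t - s)) <= C3 * Rpower s (1/2 + gamma) * Rpower (t - 2*s) (- gamma)).

(* floor of a real, as a natural number (used for nonnegative arguments) *)
Definition nfloor (x : R) : nat := Z.to_nat (Int_part x).

(* sum_{i = lo}^{hi} f i  (empty if hi < lo) *)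
Fixpoint sum_from (lo : nat) (m : nat) (f : nat -> R) : R :=
  match m with
  | O => 0
  | S m' => f lo + sum_from (S lo) m' f
  end.
Definition sum_range (lo hi : nat) (f : nat -> R) : R :=
  sum_from lo (S hi - lo) f.

Definition summand (K : R -> R -> R) (n j k : nat) : R :=
  Rabs (beta K n (2*j-1) (2*k-1) ^ 2 - beta K n (2*j-1) (2*k-2) ^ 2
        - beta K n (2*j-2) (2*k-1) ^ 2 + beta K n (2*j-2) (2*k-2) ^ 2).

Definition double_sum (K : R -> R -> R) (t0 t1 t2 t3 : R) (n : nat) : R :=
  sum_range (nfloor (INR n * t0 / 2) + 1) (nfloor (INR n * t1 / 2)) (fun j =>
    sum_range (nfloor (INR n * t2 / 2) + 1) (nfloor (INR n * t3 / 2)) (fun k =>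
      summand K n j k)).

(* Write s = 1/n and beta(a,c) = beta_n(a,c), the covariance of two increments
   of W of length s.  The proof shows that the double sum is O(sqrt s):

   - Off-diagonal decay.  For a, c >= 1, |beta(a,c)| <= 4 C1 sqrt s / (|a-c|+1):
     near the diagonal by Cauchy-Schwarz (positive semidefiniteness of K) and
     condition (i), away from it by condition (ii).  Every term of the summand
     for (j,k) with j >= 2 is then O(s / (k-j+1)^2), and summing this profile
     over the index rectangle gives O(s sqrt n) = O(sqrt s).
   - The first row.  For j = 1 two terms beta(0,.)^2 occur, for which no
     pointwise decay is available.  Instead, Bessel's inequality for the
     projection of the first increment on the later ones, together with a
     Schur test for their Gram matrix (row sums <= 16 C1 sqrt T by the decay
     bound), gives Σ_c beta(0,c)^2 <= 16 C1 sqrt T beta(0,0) = O(sqrt s). *)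

From Stdlib Require Import Reals Lra Lia List ZArith.
Open Scope R_scope.

Fixpoint sumN (N : nat) (f : nat -> R) : R :=
  match N with O => 0 | S N' => sumN N' f + f N' end.

Lemma sumN_ext N f g : (forall i, (i < N)%nat -> f i = g i) -> sumN N f = sumN N g.
Proof.
  induction N as [|N IH]; simpl; intros H; [reflexivity|].
  rewrite IH by (intros; apply H; lia). rewrite H by lia. reflexivity.
Qed.

Lemma sumN_le N f g : (forall i, (i < N)%nat -> f i <= g i) -> sumN N f <= sumN N g.
Proof.
  induction N as [|N IH]; simpl; intros H; [lra|].
  assert (sumN N f <= sumN N g) by (apply IH; intros; apply H; lia).
  assert (f N <= g N) by (apply H; lia). lra.
Qed.

Lemma sumN_zero N : sumN N (fun _ => 0) = 0.
Proof. induction N as [|N IH]; simpl; [reflexivity| rewrite IH; lra]. Qed.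

Lemma sumN_nonneg N f : (forall i, (i < N)%nat -> 0 <= f i) -> 0 <= sumN N f.
Proof. intros H. rewrite <- (sumN_zero N). apply sumN_le. exact H. Qed.

Lemma sumN_plus N f g : sumN N (fun i => f i + g i) = sumN N f + sumN N g.
Proof. induction N as [|N IH]; simpl; [lra| rewrite IH; lra]. Qed.

Lemma sumN_scal N c f : sumN N (fun i => c * f i) = c * sumN N f.
Proof. induction N as [|N IH]; simpl; [lra| rewrite IH; lra]. Qed.

Lemma sumN_S N f : sumN (S N) f = sumN N f + f N.
Proof. reflexivity. Qed.

Lemma sumN_shift N f : sumN (S N) f = f O + sumN N (fun i => f (S i)).
Proof. induction N as [|N IH]; simpl in *; [lra| rewrite IH; lra]. Qed.

Lemma sumN_app N M f : sumN (N + M) f = sumN N f + sumN M (fun i => f (N + i)%nat).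
Proof.
  induction M as [|M IH]; simpl.
  - rewrite Nat.add_0_r. lra.
  - rewrite Nat.add_succ_r. simpl. rewrite IH. lra.
Qed.

Lemma sumN_mono_len N M f : (N <= M)%nat -> (forall i, (i < M)%nat -> 0 <= f i) ->
  sumN N f <= sumN M f.
Proof.
  intros H Hf. replace M with (N + (M - N))%nat by lia. rewrite sumN_app.
  assert (0 <= sumN (M - N) (fun i => f (N + i)%nat)) by (apply sumN_nonneg; intros; apply Hf; lia).
  lra.
Qed.

Lemma sumN_rev N f : sumN N f = sumN N (fun i => f (N - 1 - i)%nat).
Proof.
  induction N as [|N IH]; [reflexivity|].
  rewrite (sumN_shift N (fun i => f (S N - 1 - i)%nat)). rewrite sumN_S, IH.
  replace (S N - 1 - 0)%nat with N by lia.
  rewrite (sumN_ext N (fun i => f (N - 1 - i)%nat) (fun i => f (S N - 1 - S i)%nat)).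
  - lra.
  - intros; f_equal; lia.
Qed.

Lemma sumN_swap N M (f : nat -> nat -> R) :
  sumN N (fun i => sumN M (fun j => f i j)) = sumN M (fun j => sumN N (fun i => f i j)).
Proof.
  induction N as [|N IH]; simpl.
  - rewrite sumN_zero; reflexivity.
  - rewrite IH, <- sumN_plus. reflexivity.
Qed.

(* Only the first term of the range can satisfy [N0 + 1 + i = 1]. *)
Lemma sumN_first_only P N0 X : 0 <= X ->
  sumN P (fun i => if Nat.eqb (N0 + 1 + i) 1 then X else 0) <= X.
Proof.
  intros HX. destruct P as [|P]; [simpl; lra|].
  rewrite sumN_shift, (sumN_ext P _ (fun _ => 0)), sumN_zero.
  - destruct (Nat.eqb _ _); lra.
  - intros i _. replace (Nat.eqb (N0 + 1 + S i) 1) with false; [reflexivity|].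
    symmetry. apply Nat.eqb_neq. lia.
Qed.

Lemma sumN_pairs (g : nat -> R) N M :
  sumN M (fun l => g (2 * (N + 1 + l) - 1)%nat + g (2 * (N + 1 + l) - 2)%nat)
  = sumN (2 * M) (fun i => g (2 * N + i)%nat).
Proof.
  induction M as [|M IH]; [reflexivity|].
  replace (2 * S M)%nat with (S (S (2 * M))) by lia. rewrite !sumN_S, IH.
  replace (2 * (N + 1 + M) - 1)%nat with (2 * N + S (2 * M))%nat by lia.
  replace (2 * (N + 1 + M) - 2)%nat with (2 * N + 2 * M)%nat by lia. lra.
Qed.

Lemma sum_from_sumN lo m f : sum_from lo m f = sumN m (fun i => f (lo + i)%nat).
Proof.
  revert lo; induction m as [|m IH]; intros lo; [reflexivity|].
  cbn [sum_from]. rewrite IH, sumN_shift, Nat.add_0_r.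
  f_equal. apply sumN_ext. intros; f_equal; lia.
Qed.

(* Telescoping: Σ_{i<L} 1/(d+i)^2 <= 2/d for d >= 1. *)
Lemma sum_inv_sq_le L : forall d, 1 <= d -> sumN L (fun i => / (d + INR i) ^ 2) <= 2 / d.
Proof.
  induction L as [|L IH]; intros d Hd.
  - simpl. apply Rlt_le, Rdiv_lt_0_compat; lra.
  - rewrite sumN_shift, (sumN_ext L _ (fun i => / ((d + 1) + INR i) ^ 2)).
    2:{ intros i _. rewrite S_INR. f_equal. f_equal. ring. }
    specialize (IH (d + 1) ltac:(lra)). simpl INR. rewrite Rplus_0_r.
    assert (/ d ^ 2 + 2 / (d + 1) <= 2 / d).
    { assert (E : / d ^ 2 + 2 / (d + 1) - 2 / d = (1 - d) * / (d ^ 2 * (d + 1))) by (field; lra).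
      assert (0 < / (d ^ 2 * (d + 1))).
      { apply Rinv_0_lt_compat, Rmult_lt_0_compat; [apply pow_lt|]; lra. }
      nra. }
    lra.
Qed.

Lemma harmonic_le_sqrt L : sumN L (fun i => / (INR i + 1)) <= 2 * sqrt (INR L).
Proof.
  induction L as [|L IH].
  - simpl. rewrite sqrt_0. lra.
  - rewrite sumN_S, S_INR.
    set (a := sqrt (INR L)) in *. set (b := sqrt (INR L + 1)).
    assert (HL : 0 <= INR L) by apply pos_INR.
    assert (Ha : 0 <= a) by apply sqrt_pos.
    assert (Hb2 : b * b = INR L + 1) by (apply sqrt_sqrt; lra).
    assert (Ha2 : a * a = INR L) by (apply sqrt_sqrt; lra).
    assert (Hb1 : 1 <= b) by (unfold b; rewrite <- sqrt_1 at 1; apply sqrt_le_1_alt; lra).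
    assert (Hab : a <= b) by (apply sqrt_le_1_alt; lra).
    assert (/ (INR L + 1) <= 2 * (b - a)).
    { assert (Hdiff : (b - a) * (b + a) = 1) by nra.
      assert (1 <= 2 * (b - a) * (b * b)).
      { assert (0 <= (b - a) * b) by nra. nra. }
      rewrite <- Hb2. apply (Rmult_le_reg_r (b * b)); [nra|].
      rewrite Rinv_l by nra. lra. }
    lra.
Qed.

(* The pairs (c, t) of a list
   stand for the linear combination Σ c W_t; [form K P1 P2] is the corresponding
   bilinear form, and a family of increments mu_i (W_{u_i} - W_{v_i}) is encoded
   by [incr_list]. *)
Section PsdKernel.
Variable K : R -> R -> R.

Definition form (P1 P2 : list (R * R)) : R :=
  fold_right Rplus 0
    (map (fun p => fold_right Rplus 0 (map (fun q => fst p * fst q * K (snd p) (snd q)) P2)) P1).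

Lemma fold_plus_app (l1 l2 : list R) :
  fold_right Rplus 0 (l1 ++ l2) = fold_right Rplus 0 l1 + fold_right Rplus 0 l2.
Proof. induction l1 as [|x l1 IH]; simpl; [lra| rewrite IH; lra]. Qed.

Lemma form_app_l P1 P1' P2 : form (P1 ++ P1') P2 = form P1 P2 + form P1' P2.
Proof. unfold form. rewrite map_app, fold_plus_app. reflexivity. Qed.

Lemma form_app_r P1 P2 P2' : form P1 (P2 ++ P2') = form P1 P2 + form P1 P2'.
Proof.
  unfold form. induction P1 as [|p P1 IH]; simpl; [lra|].
  rewrite IH, map_app, fold_plus_app. lra.
Qed.

Lemma form_nil_r P : form P nil = 0.
Proof. unfold form. induction P as [|p P IH]; simpl in *; lra. Qed.

Variables (mu u v : nat -> R).

Definition incr (i : nat) : list (R * R) := (mu i, u i) :: (- mu i, v i) :: nil.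

Fixpoint incr_list (N : nat) : list (R * R) :=
  match N with O => nil | S N' => incr_list N' ++ incr N' end.

Lemma form_incr i j :
  form (incr i) (incr j) = mu i * mu j * covinc K (u i) (v i) (u j) (v j).
Proof. unfold form, incr, covinc; simpl. ring. Qed.

Lemma form_incr_list_r P M : form P (incr_list M) = sumN M (fun j => form P (incr j)).
Proof.
  induction M as [|M IH]; simpl; [apply form_nil_r|].
  rewrite form_app_r, IH. reflexivity.
Qed.

Lemma form_incr_list N M :
  form (incr_list N) (incr_list M) = sumN N (fun i => sumN M (fun j => form (incr i) (incr j))).
Proof.
  induction N as [|N IH]; simpl; [reflexivity|].
  rewrite form_app_l, IH, form_incr_list_r. reflexivity.
Qed.

Lemma incr_list_times_nonneg N : (forall i, 0 <= u i /\ 0 <= v i) ->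
  Forall (fun t => 0 <= t) (map snd (incr_list N)).
Proof.
  intros H. induction N as [|N IH]; simpl; [constructor|].
  rewrite map_app. apply Forall_app; split; [exact IH|].
  destruct (H N). simpl. constructor; [assumption| constructor; [assumption| constructor]].
Qed.

Lemma combine_map_fst_snd (P : list (R * R)) : combine (map fst P) (map snd P) = P.
Proof. induction P as [|[x y] P IH]; simpl; [reflexivity| rewrite IH; reflexivity]. Qed.

Lemma increment_variance_nonneg N : cov_psd K -> (forall i, 0 <= u i /\ 0 <= v i) ->
  0 <= sumN N (fun i => sumN N (fun j => mu i * mu j * covinc K (u i) (v i) (u j) (v j))).
Proof.
  intros Hpsd Hpos.
  pose proof (Hpsd (map snd (incr_list N)) (map fst (incr_list N))) as Hq.
  rewrite !length_map, combine_map_fst_snd in Hq.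
  specialize (Hq eq_refl (incr_list_times_nonneg N Hpos)).
  change (0 <= form (incr_list N) (incr_list N)) in Hq.
  rewrite form_incr_list in Hq. erewrite sumN_ext; [exact Hq|].
  intros i _. apply sumN_ext. intros j _. symmetry. apply form_incr.
Qed.

End PsdKernel.

Lemma schur_test L (y : nat -> R) (G : nat -> nat -> R) Lam :
  (forall i, (i < L)%nat -> sumN L (fun j => Rabs (G i j)) <= Lam) ->
  (forall j, (j < L)%nat -> sumN L (fun i => Rabs (G i j)) <= Lam) ->
  sumN L (fun i => sumN L (fun j => y i * y j * G i j)) <= Lam * sumN L (fun i => y i ^ 2).
Proof.
  intros Hrow Hcol.
  apply Rle_trans with
    (sumN L (fun i => sumN L (fun j => y i ^ 2 / 2 * Rabs (G i j) + y j ^ 2 / 2 * Rabs (G i j)))).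
  { apply sumN_le. intros i _. apply sumN_le. intros j _.
    (* 2 |y_i y_j| <= y_i^2 + y_j^2 *)
    assert (E : y i * y j * G i j <= Rabs (y i) * Rabs (y j) * Rabs (G i j)).
    { rewrite <- !Rabs_mult. apply Rle_abs. }
    rewrite <- (pow2_abs (y i)), <- (pow2_abs (y j)).
    pose proof (Rabs_pos (G i j)).
    assert (0 <= (Rabs (y i) - Rabs (y j)) ^ 2 * Rabs (G i j)) by (apply Rmult_le_pos; [apply pow2_ge_0| auto]).
    nra. }
  rewrite (sumN_ext L _ (fun i => sumN L (fun j => y i ^ 2 / 2 * Rabs (G i j))
                               + sumN L (fun j => y j ^ 2 / 2 * Rabs (G i j))))
    by (intros; apply sumN_plus).
  rewrite sumN_plus, (sumN_swap L L (fun i j => y j ^ 2 / 2 * Rabs (G i j))).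
  assert (Hhalf : forall (F : nat -> nat -> R),
    (forall i, (i < L)%nat -> sumN L (F i) <= Lam) ->
    sumN L (fun i => sumN L (fun j => y i ^ 2 / 2 * F i j)) <= Lam / 2 * sumN L (fun i => y i ^ 2)).
  { intros F HF. rewrite <- sumN_scal. apply sumN_le. intros i Hi. rewrite sumN_scal.
    pose proof (HF i Hi). pose proof (pow2_ge_0 (y i)). nra. }
  pose proof (Hhalf (fun i j => Rabs (G i j)) Hrow).
  pose proof (Hhalf (fun j i => Rabs (G i j)) Hcol).
  lra.
Qed.

(* Bessel-type inequality: if the quadratic polynomial
   x - 2 lam Y + lam^2 Q (the variance of W_0 - lam Σ y_i W_i when G is the Gram
   matrix of the W_i and y_i = <W_0, W_i>) is nonnegative, and G passes the
   Schur test with constant Lam, then Y = Σ y_i^2 <= Lam x. *)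
Lemma bessel_schur L (x : R) (y : nat -> R) (G : nat -> nat -> R) Lam :
  (forall lam, 0 <= x - 2 * lam * sumN L (fun i => y i ^ 2)
                 + lam ^ 2 * sumN L (fun i => sumN L (fun j => y i * y j * G i j))) ->
  0 < Lam ->
  (forall i, (i < L)%nat -> sumN L (fun j => Rabs (G i j)) <= Lam) ->
  (forall j, (j < L)%nat -> sumN L (fun i => Rabs (G i j)) <= Lam) ->
  sumN L (fun i => y i ^ 2) <= Lam * x.
Proof.
  intros Hvar HLam Hrow Hcol.
  pose proof (schur_test L y G Lam Hrow Hcol) as HQ.
  set (Y := sumN L (fun i => y i ^ 2)) in *.
  set (Q := sumN L (fun i => sumN L (fun j => y i * y j * G i j))) in *.
  specialize (Hvar (/ Lam)).
  assert (Hq : (/ Lam) ^ 2 * Q <= / Lam * Y).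
  { replace (/ Lam * Y) with ((/ Lam) ^ 2 * (Lam * Y)) by (field; lra).
    apply Rmult_le_compat_l; [apply pow2_ge_0| exact HQ]. }
  assert (H1 : 0 <= Lam * (x - / Lam * Y)) by (apply Rmult_le_pos; lra).
  replace (Lam * (x - / Lam * Y)) with (Lam * x - Y) in H1 by (field; lra). lra.
Qed.

Lemma exp_le_mono x y : x <= y -> exp x <= exp y.
Proof. intros [H|H]; [apply Rlt_le, exp_increasing; exact H| subst; lra]. Qed.

Lemma ln_le_mono x y : 0 < x -> x <= y -> ln x <= ln y.
Proof. intros Hx [H|H]; [apply Rlt_le, ln_increasing; assumption| subst; lra]. Qed.

Lemma rpower_decay s m y al : 0 < s -> 1 <= m -> s <= y -> 1 <= al -> al <= 3/2 ->
  s ^ 2 * Rpower (m * s) (- al) * Rpower y (- (3/2 - al)) <= sqrt s / m.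
Proof.
  intros Hs Hm Hy Ha1 Ha2.
  assert (Hlm : 0 <= ln m) by (rewrite <- ln_1; apply ln_le_mono; lra).
  assert (Hl : ln s <= ln y) by (apply ln_le_mono; lra).
  unfold Rpower. rewrite ln_mult by lra.
  rewrite <- Rpower_sqrt by lra. unfold Rpower.
  replace (s ^ 2) with (exp (2 * ln s))
    by (replace (2 * ln s) with (ln s + ln s) by ring; rewrite exp_plus, exp_ln by lra; ring).
  unfold Rdiv. replace (/ m) with (exp (- ln m)) by (rewrite exp_Ropp, exp_ln by lra; reflexivity).
  rewrite <- !exp_plus.
  apply exp_le_mono. nra.
Qed.

Definition dist_nat (i j : nat) : nat := ((i - j) + (j - i))%nat.

Lemma sum_inv_dist_le L i : (i < L)%nat ->
  sumN L (fun j => / (INR (dist_nat i j) + 1)) <= 2 * sumN L (fun j => / (INR j + 1)).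
Proof.
  intros Hi.
  assert (Hpos : forall j, 0 <= / (INR j + 1)).
  { intros j. left. apply Rinv_0_lt_compat. pose proof (pos_INR j). lra. }
  replace L with (i + (L - i))%nat at 1 by lia. rewrite sumN_app.
  assert (Left : sumN i (fun j => / (INR (dist_nat i j) + 1)) <= sumN L (fun j => / (INR j + 1))).
  { rewrite sumN_rev. eapply Rle_trans; [|apply (sumN_mono_len i L); [lia| intros; apply Hpos]].
    apply sumN_le. intros j Hj. unfold dist_nat.
    replace (i - (i - 1 - j) + (i - 1 - j - i))%nat with (S j) by lia.
    rewrite S_INR. apply Rinv_le_contravar; [pose proof (pos_INR j); lra| lra]. }
  assert (Right : sumN (L - i) (fun j => / (INR (dist_nat i (i + j)) + 1)) <= sumN L (fun j => / (INR j + 1))).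
  { eapply Rle_trans; [|apply (sumN_mono_len (L - i) L); [lia| intros; apply Hpos]].
    apply sumN_le. intros j _. unfold dist_nat.
    replace (i - (i + j) + (i + j - i))%nat with j by lia. lra. }
  lra.
Qed.

Section BetaEstimates.
Variables (K : R -> R -> R) (n : nat) (T C1 alpha : R).
Hypotheses (Hn : (1 <= n)%nat) (hsym : cov_symmetric K) (hpsd : cov_psd K).
Hypotheses (hC1 : 0 < C1) (halpha : 1 < alpha /\ alpha <= 3/2).
Hypotheses (hi : cond_i K T C1) (hii : cond_ii K T C1 alpha).

Lemma INR_n_pos : 0 < INR n.
Proof. apply lt_0_INR. lia. Qed.

Lemma grid_step a : INR (a + 1) / INR n - / INR n = INR a / INR n.
Proof. pose proof INR_n_pos. rewrite plus_INR. simpl. field. lra. Qed.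

Lemma grid_mono a c : (a <= c)%nat -> INR a / INR n <= INR c / INR n.
Proof.
  intros H. pose proof INR_n_pos. unfold Rdiv. apply Rmult_le_compat_r.
  - left; apply Rinv_0_lt_compat; lra.
  - apply le_INR; exact H.
Qed.

Lemma beta_sym a c : beta K n a c = beta K n c a.
Proof. unfold beta, covinc. rewrite !(hsym (INR (a + 1) / INR n)), !(hsym (INR a / INR n)). ring. Qed.

Lemma beta_form_nonneg N (mu : nat -> R) (idx : nat -> nat) :
  0 <= sumN N (fun i => sumN N (fun j => mu i * mu j * beta K n (idx i) (idx j))).
Proof.
  apply (increment_variance_nonneg K mu (fun i => INR (idx i + 1) / INR n)
           (fun i => INR (idx i) / INR n) N hpsd).
  intros i. pose proof INR_n_pos.
  split; apply Rmult_le_pos; try apply pos_INR; left; apply Rinv_0_lt_compat; lra.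
Qed.

Lemma beta_cauchy_schwarz a c : Rabs (beta K n a c) <= (beta K n a a + beta K n c c) / 2.
Proof.
  pose proof (beta_form_nonneg 2 (fun _ => 1) (fun i => if Nat.eqb i 0 then a else c)) as Hplus.
  pose proof (beta_form_nonneg 2 (fun i => if Nat.eqb i 0 then 1 else -1)
                (fun i => if Nat.eqb i 0 then a else c)) as Hminus.
  simpl in Hplus, Hminus. rewrite (beta_sym c a) in Hplus, Hminus.
  unfold Rabs; destruct (Rcase_abs _); lra.
Qed.

Lemma beta_diag_le a : INR (a + 1) / INR n <= T -> beta K n a a <= C1 * sqrt (/ INR n).
Proof.
  intros HT. pose proof INR_n_pos.
  pose proof (hi (/ INR n) (INR (a + 1) / INR n)) as Hcond. rewrite grid_step in Hcond.
  apply Hcond; [apply Rinv_0_lt_compat; lra| |exact HT].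
  pose proof (grid_step a).
  assert (0 <= INR a / INR n) by (apply Rmult_le_pos; [apply pos_INR| left; apply Rinv_0_lt_compat; lra]).
  lra.
Qed.

Lemma beta_abs_le a c : INR (a + 1) / INR n <= T -> INR (c + 1) / INR n <= T ->
  Rabs (beta K n a c) <= C1 * sqrt (/ INR n).
Proof.
  intros Ha Hc. eapply Rle_trans; [apply beta_cauchy_schwarz|].
  pose proof (beta_diag_le a Ha). pose proof (beta_diag_le c Hc). lra.
Qed.

Lemma beta_far a c : (1 <= a)%nat -> (a + 2 <= c)%nat -> INR (c + 1) / INR n <= T ->
  Rabs (beta K n a c) <= 2 * C1 * sqrt (/ INR n) / INR (c - a).
Proof.
  intros Ha Hac HT. pose proof INR_n_pos.
  set (s := / INR n). assert (Hs : 0 < s) by (apply Rinv_0_lt_compat; lra).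
  set (m := INR (c - a)).
  assert (Hm : 2 <= m) by (replace 2 with (INR 2) by reflexivity; apply le_INR; lia).
  set (t := INR (a + 1) / INR n). set (r := INR (c + 1) / INR n) in HT |- *.
  assert (Htr : Rabs (t - r) = m * s).
  { unfold t, r, m, s. rewrite Rabs_minus_sym, Rabs_right.
    - rewrite minus_INR by lia. rewrite !plus_INR. field. lra.
    - apply Rge_minus, Rle_ge, grid_mono. lia. }
  assert (Hmin : Rmin t r - s = INR a / INR n) by (rewrite Rmin_left; [apply grid_step| apply grid_mono; lia]).
  assert (H2s : 2 * s <= t).
  { unfold t, s. replace (2 * / INR n) with (INR 2 / INR n) by (simpl; field; lra).
    apply grid_mono. lia. }
  assert (Htr2 : t <= r) by (apply grid_mono; lia).
  assert (Hy : s <= INR a / INR n).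
  { unfold s. replace (/ INR n) with (INR 1 / INR n) by (simpl; field; lra). apply grid_mono. exact Ha. }
  pose proof (hii s r t Hs ltac:(lra) HT H2s ltac:(lra)) as Hcond.
  rewrite Htr, Hmin in Hcond. unfold t, r in Hcond. rewrite !grid_step in Hcond.
  fold (beta K n a c) in Hcond.
  specialize (Hcond ltac:(nra)).
  pose proof (rpower_decay s m (INR a / INR n) alpha Hs ltac:(lra) Hy ltac:(lra) ltac:(lra)) as B1.
  pose proof (rpower_decay s m s (3/2) Hs ltac:(lra) (Rle_refl _) ltac:(lra) ltac:(lra)) as B2.
  replace (- (3/2 - 3/2)) with 0 in B2 by ring. rewrite Rpower_O, Rmult_1_r in B2 by lra.
  replace (2 * C1 * sqrt s / m) with (C1 * (sqrt s / m) + C1 * (sqrt s / m)) by (field; lra).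
  eapply Rle_trans; [exact Hcond|].
  rewrite !(Rmult_assoc C1), <- (Rmult_assoc C1 (s ^ 2)).
  apply Rplus_le_compat; rewrite !Rmult_assoc; apply Rmult_le_compat_l; try lra;
    rewrite <- !Rmult_assoc; assumption.
Qed.

(* Off-diagonal decay, from (i) near the diagonal and (ii) away from it:
   |beta(a,c)| <= 4 C1 sqrt s / (c - a + 1) for 1 <= a <= c. *)
Lemma beta_decay_ordered a c : (1 <= a)%nat -> (a <= c)%nat -> INR (c + 1) / INR n <= T ->
  Rabs (beta K n a c) <= 4 * C1 * sqrt (/ INR n) / (INR (c - a) + 1).
Proof.
  intros Ha Hac HT.
  assert (Hq : 0 <= C1 * sqrt (/ INR n)) by (pose proof (sqrt_pos (/ INR n)); nra).
  set (m := INR (c - a)). assert (Hm0 : 0 <= m) by apply pos_INR.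
  destruct (Nat.le_gt_cases (a + 2) c) as [Hfar|Hnear].
  - assert (Hm : 2 <= m) by (replace 2 with (INR 2) by reflexivity; apply le_INR; lia).
    eapply Rle_trans; [apply beta_far; assumption|].
    assert (Hinv : / m <= 2 * / (m + 1)).
    { replace (2 * / (m + 1)) with (/ ((m + 1) / 2)) by (field; lra).
      apply Rinv_le_contravar; lra. }
    fold m. unfold Rdiv.
    replace (2 * C1 * sqrt (/ INR n) * / m) with (2 * (C1 * sqrt (/ INR n)) * / m) by ring.
    replace (4 * C1 * sqrt (/ INR n) * / (m + 1))
      with (2 * (C1 * sqrt (/ INR n)) * (2 * / (m + 1))) by ring.
    apply Rmult_le_compat_l; lra.
  - assert (Hm : m <= 1) by (replace 1 with (INR 1) by reflexivity; apply le_INR; lia).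
    eapply Rle_trans; [apply beta_abs_le; [|exact HT]|].
    + eapply Rle_trans; [apply grid_mono; apply (Nat.add_le_mono_r a c 1); exact Hac| exact HT].
    + assert (Hinv : / 2 <= / (m + 1)) by (apply Rinv_le_contravar; lra).
      unfold Rdiv.
      replace (4 * C1 * sqrt (/ INR n) * / (m + 1)) with (C1 * sqrt (/ INR n) * (4 * / (m + 1))) by ring.
      rewrite <- (Rmult_1_r (C1 * sqrt (/ INR n))) at 1.
      apply Rmult_le_compat_l; lra.
Qed.

Lemma beta_decay a c : (1 <= a)%nat -> (1 <= c)%nat ->
  INR (a + 1) / INR n <= T -> INR (c + 1) / INR n <= T ->
  Rabs (beta K n a c) <= 4 * C1 * sqrt (/ INR n) / (INR (dist_nat a c) + 1).
Proof.
  intros Ha Hc HTa HTc. unfold dist_nat.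
  destruct (Nat.le_gt_cases a c).
  - replace (a - c + (c - a))%nat with (c - a)%nat by lia.
    apply beta_decay_ordered; assumption.
  - replace (a - c + (c - a))%nat with (a - c)%nat by lia.
    rewrite beta_sym. apply beta_decay_ordered; [assumption| lia| assumption].
Qed.

Lemma beta_sq_decay a c d : (1 <= a)%nat -> (a <= c)%nat -> (d <= c - a)%nat ->
  INR (c + 1) / INR n <= T ->
  beta K n a c ^ 2 <= 16 * C1 ^ 2 * / INR n / (INR d + 1) ^ 2.
Proof.
  intros Ha Hac Hd HT. pose proof INR_n_pos.
  pose proof (beta_decay_ordered a c Ha Hac HT) as Hdec.
  assert (Hsq : sqrt (/ INR n) ^ 2 = / INR n)
    by (simpl; rewrite Rmult_1_r; apply sqrt_sqrt; left; apply Rinv_0_lt_compat; lra).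
  pose proof (sqrt_pos (/ INR n)).
  assert (Hgap : INR d <= INR (c - a)) by (apply le_INR; exact Hd).
  pose proof (pos_INR d).
  assert (Habs : Rabs (beta K n a c) <= 4 * C1 * sqrt (/ INR n) / (INR d + 1)).
  { eapply Rle_trans; [exact Hdec|]. unfold Rdiv. apply Rmult_le_compat_l; [nra|].
    apply Rinv_le_contravar; lra. }
  rewrite <- pow2_abs.
  eapply Rle_trans; [apply pow_incr; split; [apply Rabs_pos| exact Habs]|].
  unfold Rdiv. rewrite !Rpow_mult_distr, Hsq, pow_inv. simpl. lra.
Qed.

Lemma summand_bound j k : (1 <= j)%nat -> (j < k)%nat -> INR (2 * k) / INR n <= T ->
  summand K n j k <= 64 * C1 ^ 2 * / INR n / (INR (k - j) + 1) ^ 2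
     + (if Nat.eqb j 1 then beta K n 0 (2 * k - 1) ^ 2 + beta K n 0 (2 * k - 2) ^ 2 else 0).
Proof.
  intros Hj Hjk HT.
  assert (HT1 : INR (2 * k - 1 + 1) / INR n <= T)
    by (replace (2 * k - 1 + 1)%nat with (2 * k)%nat by lia; exact HT).
  assert (HT2 : INR (2 * k - 2 + 1) / INR n <= T)
    by (eapply Rle_trans; [apply (grid_mono _ (2 * k)); lia| exact HT]).
  set (B := 16 * C1 ^ 2 * / INR n / (INR (k - j) + 1) ^ 2).
  replace (64 * C1 ^ 2 * / INR n / (INR (k - j) + 1) ^ 2) with (4 * B) by (unfold B, Rdiv; ring).
  assert (b1 : beta K n (2 * j - 1) (2 * k - 1) ^ 2 <= B) by (apply beta_sq_decay; auto; lia).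
  assert (b2 : beta K n (2 * j - 1) (2 * k - 2) ^ 2 <= B) by (apply beta_sq_decay; auto; lia).
  pose proof (pow2_ge_0 (beta K n (2 * j - 1) (2 * k - 1))).
  pose proof (pow2_ge_0 (beta K n (2 * j - 1) (2 * k - 2))).
  pose proof (pow2_ge_0 (beta K n (2 * j - 2) (2 * k - 1))).
  pose proof (pow2_ge_0 (beta K n (2 * j - 2) (2 * k - 2))).
  unfold summand.
  destruct (Nat.eqb_spec j 1) as [Hj1|Hj1].
  - subst j. simpl (2 * 1 - 2)%nat in *. unfold Rabs; destruct (Rcase_abs _); lra.
  - assert (b3 : beta K n (2 * j - 2) (2 * k - 1) ^ 2 <= B) by (apply beta_sq_decay; auto; lia).
    assert (b4 : beta K n (2 * j - 2) (2 * k - 2) ^ 2 <= B) by (apply beta_sq_decay; auto; lia).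
    unfold Rabs; destruct (Rcase_abs _); lra.
Qed.

Lemma gram_row_sum C0 L i : (1 <= C0)%nat -> INR (C0 + L) / INR n <= T -> (i < L)%nat ->
  sumN L (fun j => Rabs (beta K n (C0 + i) (C0 + j))) <= 16 * C1 * sqrt T.
Proof.
  intros HC0 HT Hi. pose proof INR_n_pos.
  pose proof (sqrt_pos (/ INR n)).
  apply Rle_trans with (sumN L (fun j => 4 * C1 * sqrt (/ INR n) * / (INR (dist_nat i j) + 1))).
  { apply sumN_le. intros j Hj.
    replace (dist_nat i j) with (dist_nat (C0 + i) (C0 + j)) by (unfold dist_nat; lia).
    apply beta_decay; try lia;
      (eapply Rle_trans; [apply (grid_mono _ (C0 + L)); lia| exact HT]). }
  rewrite sumN_scal.
  pose proof (sum_inv_dist_le L i Hi). pose proof (harmonic_le_sqrt L).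
  assert (Hs : sqrt (/ INR n) * sqrt (INR L) <= sqrt T).
  { rewrite <- sqrt_mult_alt by (left; apply Rinv_0_lt_compat; lra).
    apply sqrt_le_1_alt.
    assert (INR L <= INR (C0 + L)) by (apply le_INR; lia).
    unfold Rdiv in HT. assert (0 < / INR n) by (apply Rinv_0_lt_compat; lra). nra. }
  apply Rle_trans with (4 * C1 * sqrt (/ INR n) * (4 * sqrt (INR L))).
  - apply Rmult_le_compat_l; [nra| lra].
  - nra.
Qed.

(* Nonnegativity of the variance of (W_{1/n} - W_0) - lam Σ_i beta(0, C0+i) (W_{(C0+i+1)/n} - W_{(C0+i)/n}). *)
Lemma beta0_projection_variance C0 L lam :
  0 <= beta K n 0 0 - 2 * lam * sumN L (fun i => beta K n 0 (C0 + i) ^ 2)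
       + lam ^ 2 * sumN L (fun i => sumN L (fun j =>
             beta K n 0 (C0 + i) * beta K n 0 (C0 + j) * beta K n (C0 + i) (C0 + j))).
Proof.
  pose proof (beta_form_nonneg (S L)
     (fun i => match i with O => 1 | S i' => - lam * beta K n 0 (C0 + i') end)
     (fun i => match i with O => O | S i' => (C0 + i')%nat end)) as H.
  rewrite sumN_shift in H. cbn beta iota in H. rewrite sumN_shift in H. cbn beta iota in H.
  rewrite (sumN_ext L (fun i => sumN (S L) _)
     (fun i => - lam * beta K n 0 (C0 + i) ^ 2 +
        lam ^ 2 * sumN L (fun j => beta K n 0 (C0 + i) * beta K n 0 (C0 + j) * beta K n (C0 + i) (C0 + j))))
    in H.
  2:{ intros i _. rewrite sumN_shift, beta_sym, <- sumN_scal. cbn beta iota. f_equal; [ring|].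
      apply sumN_ext. intros; ring. }
  rewrite (sumN_ext L (fun j => 1 * (- lam * beta K n 0 (C0 + j)) * beta K n 0 (C0 + j))
            (fun i => - lam * beta K n 0 (C0 + i) ^ 2)) in H by (intros; ring).
  rewrite sumN_plus, !sumN_scal in H. lra.
Qed.

Lemma beta0_bessel C0 L : 0 < T -> (1 <= C0)%nat -> INR (C0 + L) / INR n <= T ->
  INR (0 + 1) / INR n <= T ->
  sumN L (fun i => beta K n 0 (C0 + i) ^ 2) <= 16 * C1 * sqrt T * (C1 * sqrt (/ INR n)).
Proof.
  intros hT HC0 HT HT0.
  assert (HsT : 0 < sqrt T) by (apply sqrt_lt_R0; exact hT).
  eapply Rle_trans.
  - apply (bessel_schur L (beta K n 0 0) (fun i => beta K n 0 (C0 + i))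
             (fun i j => beta K n (C0 + i) (C0 + j)) (16 * C1 * sqrt T)).
    + apply beta0_projection_variance.
    + nra.
    + intros i Hi. apply gram_row_sum; assumption.
    + intros j Hj. rewrite (sumN_ext L _ (fun i => Rabs (beta K n (C0 + j) (C0 + i))))
        by (intros; rewrite beta_sym; reflexivity).
      apply gram_row_sum; assumption.
  - apply Rmult_le_compat_l; [nra|]. apply beta_diag_le. exact HT0.
Qed.
End BetaEstimates.

Lemma nfloor_spec x : 0 <= x -> INR (nfloor x) <= x /\ x - 1 < INR (nfloor x).
Proof.
  intros Hx. unfold nfloor. destruct (base_Int_part x) as [H1 H2].
  assert (Hz : (0 <= Int_part x)%Z).
  { apply le_IZR. destruct (Z_lt_le_dec (Int_part x) 0) as [Hl|Hl]; [|apply IZR_le in Hl; lra].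
    assert (Int_part x <= -1)%Z by lia. apply IZR_le in H. lra. }
  rewrite INR_IZR_INZ, Z2Nat.id by exact Hz. lra.
Qed.

Lemma nfloor_mono x y : 0 <= x -> x <= y -> (nfloor x <= nfloor y)%nat.
Proof.
  intros Hx Hxy. destruct (nfloor_spec x Hx) as [A1 A2]. destruct (nfloor_spec y ltac:(lra)) as [B1 B2].
  destruct (Nat.le_gt_cases (nfloor x) (nfloor y)) as [H|H]; [exact H|].
  apply le_INR in H. rewrite S_INR in H. lra.
Qed.

Lemma double_sum_rectangle K t0 t1 t2 t3 n :
  double_sum K t0 t1 t2 t3 n =
  sumN (nfloor (INR n * t1 / 2) - nfloor (INR n * t0 / 2)) (fun i =>
    sumN (nfloor (INR n * t3 / 2) - nfloor (INR n * t2 / 2)) (fun l =>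
      summand K n (nfloor (INR n * t0 / 2) + 1 + i) (nfloor (INR n * t2 / 2) + 1 + l))).
Proof.
  unfold double_sum, sum_range. rewrite sum_from_sumN.
  replace (S _ - (_ + 1))%nat with (nfloor (INR n * t1 / 2) - nfloor (INR n * t0 / 2))%nat by lia.
  apply sumN_ext. intros i _. rewrite sum_from_sumN.
  replace (S _ - (_ + 1))%nat with (nfloor (INR n * t3 / 2) - nfloor (INR n * t2 / 2))%nat by lia.
  reflexivity.
Qed.

Lemma decay_rectangle_le D P M : (P <= D + 1)%nat ->
  sumN P (fun i => sumN M (fun l => / ((INR (D - i) + 1) + INR l) ^ 2)) <= 4 * sqrt (INR P).
Proof.
  intros HP.
  apply Rle_trans with (sumN P (fun i => 2 * / (INR (D - i) + 1))).
  { apply sumN_le. intros i _. pose proof (pos_INR (D - i)).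
    apply sum_inv_sq_le. lra. }
  rewrite sumN_scal, sumN_rev.
  assert (sumN P (fun i => / (INR (D - (P - 1 - i)) + 1)) <= sumN P (fun i => / (INR i + 1))).
  { apply sumN_le. intros i Hi. pose proof (pos_INR i).
    apply Rinv_le_contravar; [lra|]. apply Rplus_le_compat_r, le_INR. lia. }
  pose proof (harmonic_le_sqrt P). lra.
Qed.

Lemma cv_of_sqrt_bound (u : nat -> R) (C : R) (N : nat) : 0 < C ->
  (forall n, (N <= n)%nat -> 0 <= u n <= C * sqrt (/ INR n)) -> Un_cv u 0.
Proof.
  intros HC Hu eps Heps.
  set (x := (C / eps) ^ 2).
  assert (Hx : 0 < x) by (apply pow_lt, Rdiv_lt_0_compat; lra).
  exists (Nat.max N (nfloor x + 1)). intros n Hn.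
  destruct (nfloor_spec x ltac:(lra)) as [_ Hf].
  assert (Hnx : x < INR n).
  { assert (Hle : (nfloor x + 1 <= n)%nat) by lia. apply le_INR in Hle.
    rewrite plus_INR in Hle. simpl in Hle. lra. }
  destruct (Hu n ltac:(lia)) as [Hlo Hhi].
  unfold R_dist. rewrite Rminus_0_r, Rabs_right by lra.
  assert (Hq : sqrt (/ INR n) < eps / C).
  { rewrite <- (sqrt_pow2 (eps / C)) by (left; apply Rdiv_lt_0_compat; lra).
    apply sqrt_lt_1_alt. split; [left; apply Rinv_0_lt_compat; lra|].
    replace ((eps / C) ^ 2) with (/ x) by (unfold x; field; lra).
    apply Rinv_lt_contravar; nra. }
  apply (Rmult_lt_compat_l C) in Hq; [|exact HC].
  replace (C * (eps / C)) with eps in Hq by (field; lra). lra.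
Qed.

Section DoubleSumBound.
Variables (K : R -> R -> R) (T C1 alpha t0 t1 t2 t3 : R) (n : nat).
Hypotheses (hT : 0 < T) (hsym : cov_symmetric K) (hpsd : cov_psd K).
Hypotheses (hC1 : 0 < C1) (halpha : 1 < alpha /\ alpha <= 3/2).
Hypotheses (hi : cond_i K T C1) (hii : cond_ii K T C1 alpha).
Hypotheses (h01 : 0 <= t0) (h1 : t0 < t1) (h2 : t1 <= t2) (h3 : t2 < t3) (h4 : t3 <= T).
Hypotheses (Hn : (1 <= n)%nat) (Hnt2 : 4 <= INR n * t2).

Let N (t : R) : nat := nfloor (INR n * t / 2).

Lemma N_mono t t' : 0 <= t -> t <= t' -> (N t <= N t')%nat.
Proof.
  intros Ht Htt'. pose proof (INR_n_pos n Hn).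
  apply nfloor_mono; [|apply Rmult_le_compat_r; [|apply Rmult_le_compat_l]]; try lra.
  apply Rmult_le_pos; [apply Rmult_le_pos|]; lra.
Qed.

Lemma N2_pos : (1 <= N t2)%nat.
Proof.
  pose proof (INR_n_pos n Hn).
  destruct (nfloor_spec (INR n * t2 / 2)) as [_ Hf]; [apply Rmult_le_pos; lra|].
  destruct (Nat.le_gt_cases 1 (N t2)) as [Hpos|Hzero]; [exact Hpos|].
  unfold N in Hzero. replace (nfloor (INR n * t2 / 2)) with 0%nat in Hf by lia. simpl in Hf. lra.
Qed.

Lemma N3_in_range m : (m <= 2 * N t3)%nat -> INR m / INR n <= T.
Proof.
  intros Hm. pose proof (INR_n_pos n Hn).
  destruct (nfloor_spec (INR n * t3 / 2)) as [Hf _]; [apply Rmult_le_pos; nra|].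
  apply le_INR in Hm. rewrite mult_INR in Hm. simpl in Hm. fold (N t3) in Hf.
  apply (Rmult_le_reg_l (INR n)); [lra|]. unfold Rdiv.
  rewrite <- Rmult_assoc, (Rmult_comm (INR n)), Rmult_assoc, Rinv_r by lra. nra.
Qed.

Lemma decay_part_le :
  sumN (N t1 - N t0) (fun i => sumN (N t3 - N t2) (fun l =>
    64 * C1 ^ 2 * / INR n / (INR ((N t2 + 1 + l) - (N t0 + 1 + i)) + 1) ^ 2))
  <= 256 * C1 ^ 2 * sqrt T * sqrt (/ INR n).
Proof.
  pose proof (INR_n_pos n Hn). pose proof (pow2_ge_0 C1).
  assert (Hs : 0 < / INR n) by (apply Rinv_0_lt_compat; lra).
  pose proof (N_mono t1 t2 ltac:(lra) h2). pose proof (N_mono t2 t3 ltac:(lra) ltac:(lra)).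
  set (P := (N t1 - N t0)%nat).
  rewrite (sumN_ext P _ (fun i => 64 * C1 ^ 2 * / INR n *
      sumN (N t3 - N t2) (fun l => / ((INR (N t2 - N t0 - i) + 1) + INR l) ^ 2))).
  2:{ intros i Hi. unfold P in Hi. rewrite <- sumN_scal. apply sumN_ext. intros l _.
      unfold Rdiv. f_equal. f_equal. f_equal.
      replace (N t2 + 1 + l - (N t0 + 1 + i))%nat with (N t2 - N t0 - i + l)%nat by lia.
      rewrite plus_INR. ring. }
  rewrite sumN_scal.
  pose proof (decay_rectangle_le (N t2 - N t0) P (N t3 - N t2) ltac:(unfold P; lia)) as Hdec.
  (* P <= n T, hence s sqrt P <= sqrt s sqrt T *)
  assert (HP : INR P <= INR n * T).
  { assert (Hle : (2 * P <= 2 * N t3)%nat) by (unfold P; lia).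
    pose proof (N3_in_range _ Hle) as HPT. rewrite mult_INR in HPT. simpl in HPT.
    pose proof (pos_INR P). unfold Rdiv in HPT.
    apply (Rmult_le_compat_l (INR n)) in HPT; [|lra].
    replace (INR n * ((1 + 1) * INR P * / INR n)) with (2 * INR P) in HPT by (field; lra). lra. }
  assert (Hsq : / INR n * sqrt (INR P) <= sqrt T * sqrt (/ INR n)).
  { assert (E : / INR n * sqrt (INR P) = sqrt (/ INR n) * sqrt (/ INR n * INR P)).
    { rewrite sqrt_mult_alt by lra. rewrite <- Rmult_assoc, sqrt_sqrt by lra. reflexivity. }
    rewrite E, Rmult_comm. apply Rmult_le_compat_r; [apply sqrt_pos|]. apply sqrt_le_1_alt.
    apply (Rmult_le_reg_l (INR n)); [lra|].
    replace (INR n * (/ INR n * INR P)) with (INR P) by (field; lra). lra. }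
  apply Rle_trans with (64 * C1 ^ 2 * (4 * (/ INR n * sqrt (INR P)))).
  - rewrite Rmult_assoc. apply Rmult_le_compat_l; [lra|]. nra.
  - nra.
Qed.

Lemma first_row_part_le :
  sumN (N t1 - N t0) (fun i => sumN (N t3 - N t2) (fun l =>
    if Nat.eqb (N t0 + 1 + i) 1
    then beta K n 0 (2 * (N t2 + 1 + l) - 1) ^ 2 + beta K n 0 (2 * (N t2 + 1 + l) - 2) ^ 2
    else 0))
  <= 16 * C1 ^ 2 * sqrt T * sqrt (/ INR n).
Proof.
  pose proof N2_pos. pose proof (N_mono t2 t3 ltac:(lra) ltac:(lra)).
  set (X := sumN (N t3 - N t2) (fun l =>
    beta K n 0 (2 * (N t2 + 1 + l) - 1) ^ 2 + beta K n 0 (2 * (N t2 + 1 + l) - 2) ^ 2)).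
  assert (HX : X <= 16 * C1 * sqrt T * (C1 * sqrt (/ INR n))).
  { unfold X. rewrite (sumN_pairs (fun c => beta K n 0 c ^ 2)).
    apply (beta0_bessel K n T C1 alpha); try assumption; try lia; apply N3_in_range; lia. }
  assert (HX0 : 0 <= X).
  { apply sumN_nonneg. intros. pose proof (pow2_ge_0 (beta K n 0 (2 * (N t2 + 1 + i) - 1))).
    pose proof (pow2_ge_0 (beta K n 0 (2 * (N t2 + 1 + i) - 2))). lra. }
  rewrite (sumN_ext _ _ (fun i => if Nat.eqb (N t0 + 1 + i) 1 then X else 0)).
  - pose proof (sumN_first_only (N t1 - N t0) (N t0) X HX0). lra.
  - intros i _. destruct (Nat.eqb _ _); [reflexivity| apply sumN_zero].
Qed.

Lemma double_sum_le :
  0 <= double_sum K t0 t1 t2 t3 n <= 272 * C1 ^ 2 * sqrt T * sqrt (/ INR n).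
Proof.
  rewrite double_sum_rectangle. fold (N t0) (N t1) (N t2) (N t3).
  split.
  - apply sumN_nonneg. intros i _. apply sumN_nonneg. intros l _. apply Rabs_pos.
  - pose proof (N_mono t1 t2 ltac:(lra) h2). pose proof N2_pos.
    eapply Rle_trans.
    { apply sumN_le. intros i Hi. apply sumN_le. intros l Hl.
      apply (summand_bound K n T C1 alpha); try assumption; try lia. apply N3_in_range. lia. }
    rewrite (sumN_ext _ _ (fun i => _ + _)) by (intros; apply sumN_plus).
    rewrite sumN_plus.
    pose proof decay_part_le. pose proof first_row_part_le. lra.
Qed.
End DoubleSumBound.

Theorem lemma6p1 (K : R -> R -> R) (T : R) (hT : 0 < T)
  (hG : gaussian_cov K)
  (C1 C3 alpha gamma : R) (hC1 : 0 < C1) (hC3 : 0 < C3)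
  (halpha : 1 < alpha /\ alpha <= 3/2) (hgamma : 0 < gamma)
  (hi : cond_i K T C1) (hii : cond_ii K T C1 alpha) (hiv : cond_iv K T C3 gamma)
  (t0 t1 t2 t3 : R) (h01 : 0 <= t0) (h1 : t0 < t1) (h2 : t1 <= t2) (h3 : t2 < t3)
  (h4 : t3 <= T) :
  Un_cv (double_sum K t0 t1 t2 t3) 0.
Proof.
  destruct hG as [hsym [hpsd _]].
  assert (Ht2 : 0 < t2) by lra.
  (* for n > 4 / t2 the bound of [double_sum_le] applies *)
  apply (cv_of_sqrt_bound _ (272 * C1 ^ 2 * sqrt T) (nfloor (4 / t2) + 1)).
  - pose proof (sqrt_lt_R0 T hT). pose proof (pow_lt C1 2 hC1). nra.
  - intros n Hn.
    destruct (nfloor_spec (4 / t2)) as [_ Hf]; [apply Rlt_le, Rdiv_lt_0_compat; lra|].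
    apply le_INR in Hn. rewrite plus_INR in Hn. simpl in Hn.
    assert (Hn1 : (1 <= n)%nat) by (apply INR_le; simpl; pose proof (pos_INR (nfloor (4 / t2))); lra).
    assert (Hnt2 : 4 <= INR n * t2).
    { apply (Rmult_le_compat_r t2) in Hn; [|lra].
      unfold Rdiv in Hf. replace 4 with (4 * / t2 * t2) by (field; lra). nra. }
    apply (double_sum_le K T C1 alpha); assumption.
Qed.
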